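(* Let $T$ be a $C_{p^rq^s}$-transfer system, let $(x,y)$ be a vertex, and let $(a,b)$ be the lexicographically smallest vertex in the connected component of $(x,y)$ in $T$. Then $T$ contains the edge $(a,b)\to(x,y)$.
   Context: $p,q$ are distinct primes and $r,s\ge 0$ integers. The subgroups of $C_{p^rq^s}$ are identified with grid points $(i,j)$, $0\le i\le r$, $0\le j\le s$, where $(i,j)$ stands for $C_{p^iq^j}$. A $C_{p^rq^s}$-transfer system is a partial order $\to$ on these vertices such that: $(i_1,j_1)\to(i_2,j_2)$ implies $i_1\le i_2$, $j_1\le j_2$; it is reflexive and transitive; and $(i_1,j_1)\to(i_2,j_2)$ implies $(\min\{i_1,a\},\min\{j_1,b\})\to(\min\{i_2,a\},\min\{j_2,b\})$ for every vertex $(a,b)$. Connected components are those of the underlying undirected graph. Lexicographic order: $(a,b)<_L(c,d)$ if $a<c$, or $a=c$ and $b<d$. *)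

From mathcomp Require Import all_boot all_order.
Set Implicit Arguments. Unset Strict Implicit. Unset Printing Implicit Defensive.

(* Vertex (i,j) with 0 <= i <= r, 0 <= j <= s stands for the subgroup C_{p^i q^j}
   of C_{p^r q^s}. The primes p, q play no role in the combinatorial definition. *)
Definition vertex (r s : nat) : finType := ('I_r.+1 * 'I_s.+1)%type.

Definition vmin (r s : nat) (u v : vertex r s) : vertex r s :=
  (inord (minn u.1 v.1), inord (minn u.2 v.2)).

(* A C_{p^r q^s}-transfer system: a partial order refining the product order
   and closed under restriction (taking componentwise min with any vertex). *)
Definition transfer_system (r s : nat) (T : rel (vertex r s)) : Prop :=
  [/\ (forall u v, T u v -> (u.1 <= v.1)%N /\ (u.2 <= v.2)%N),
      reflexive T,
      transitive T,
      antisymmetric T &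
      (forall u v w, T u v -> T (vmin u w) (vmin v w))].

Definition undirected (r s : nat) (T : rel (vertex r s)) : rel (vertex r s) :=
  fun u v => T u v || T v u.

Definition same_component (r s : nat) (T : rel (vertex r s)) (u v : vertex r s) : bool :=
  connect (undirected T) u v.

Definition lex_le (r s : nat) (u v : vertex r s) : bool :=
  (u.1 < v.1)%N || ((u.1 == v.1) && (u.2 <= v.2)%N).

From mathcomp Require Import all_boot all_order.
Set Implicit Arguments. Unset Strict Implicit. Unset Printing Implicit Defensive.

(* Let a be the lexicographic minimum of a component. We show that a -> c
   for every c in the component, following an undirected path from a. A
   forward edge c -> d extends a -> c by transitivity. For a backward edge
   d -> c, restricting a -> c to d gives vmin a d -> d, so vmin a d lies in
   the component. It is componentwise below a, and lexicographically not
   below a, so it equals a. *)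

Lemma vmin1 r s (u v : vertex r s) : val (vmin u v).1 = minn u.1 v.1.
Proof. by rewrite /vmin /= inordK // (leq_ltn_trans (geq_minl _ _) (ltn_ord _)). Qed.

Lemma vmin2 r s (u v : vertex r s) : val (vmin u v).2 = minn u.2 v.2.
Proof. by rewrite /vmin /= inordK // (leq_ltn_trans (geq_minl _ _) (ltn_ord _)). Qed.

Lemma vmin_idr r s (u v : vertex r s) :
  (u.1 <= v.1)%N -> (u.2 <= v.2)%N -> vmin v u = u.
Proof.
move=> le1 le2; rewrite [vmin v u]surjective_pairing [u in RHS]surjective_pairing.
by congr pair; apply: val_inj; rewrite ?vmin1 ?vmin2; apply/minn_idPr.
Qed.

Lemma lex_le_below_eq r s (a m : vertex r s) :
  (m.1 <= a.1)%N -> (m.2 <= a.2)%N -> lex_le a m -> m = a.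
Proof.
move=> le1 le2 /orP[lt1 | /andP[/eqP eq1 le2']].
  by move: (leq_trans lt1 le1); rewrite ltnn.
rewrite [m]surjective_pairing [a]surjective_pairing eq1; congr pair.
by apply: val_inj; apply/eqP; rewrite eqn_leq le2 le2'.
Qed.

Section TransferSystem.

Variables (r s : nat) (T : rel (vertex r s)).
Hypothesis TT : transfer_system T.

Local Notation edge := (undirected T).

Lemma transfer_restrict_to_source u v w : T u v -> T w v -> T (vmin u w) w.
Proof.
case: TT => Tle _ _ _ Tres Tuv Twv.
have [le1 le2] := Tle _ _ Twv.
by rewrite -{2}(vmin_idr le1 le2); apply: Tres.
Qed.

Variable a : vertex r s.
Hypothesis a_lex_min : forall c, connect edge a c -> lex_le a c.

Lemma transfer_from_lex_min_step c d :
  connect edge a c -> T a c -> edge c d -> T a d.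
Proof.
case: TT => _ _ Ttr _ _ ac Tac /orP[Tcd | Tdc]; first exact: Ttr Tcd.
have Tmd := transfer_restrict_to_source Tac Tdc.
have ad : connect edge a d.
  by apply: connect_trans ac (connect1 _); rewrite /undirected Tdc orbT.
have am : connect edge a (vmin a d).
  by apply: connect_trans ad (connect1 _); rewrite /undirected Tmd orbT.
suff <- : vmin a d = a by [].
by apply: lex_le_below_eq; rewrite ?vmin1 ?vmin2 ?geq_minl ?a_lex_min.
Qed.

Lemma transfer_from_lex_min c : connect edge a c -> T a c.
Proof.
case: TT => _ Trefl _ _ _ /connectP[p].
suff along_path b : connect edge a b -> T a b -> path edge b p -> T a (last b p).
  by move=> ap ->; apply: along_path (connect0 _ _) (Trefl a) ap.
elim: p b => [|d p IH] b ab Tab //= /andP[bd pd]; apply: IH pd.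
- exact: connect_trans ab (connect1 bd).
- exact: transfer_from_lex_min_step ab Tab bd.
Qed.

End TransferSystem.

Theorem mainTheorem11 (p q r s : nat) (T : rel (vertex r s)) (x a : vertex r s) :
  prime p -> prime q -> p != q ->
  transfer_system T ->
  same_component T x a ->
  (forall c : vertex r s, same_component T x c -> lex_le a c) ->
  T a x.
Proof.
move=> _ _ _ TT xa a_min.
have esym : connect_sym (undirected T).
  by apply: sym_connect_sym => u v; rewrite /undirected orbC.
apply: transfer_from_lex_min => // [c ac|]; last by rewrite esym.
by apply: a_min; apply: connect_trans ac.
Qed.
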